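(* Let $X\in\mathcal{Y}$ be a Banach space with $\dim X>1$ and let $(x_n)_{n\in\mathbb{Z}_+}$ be a sequence in $X$ for which there is a non-zero $u\in X^*$ with $|u(x_n)|=O(n^{-1}\|x_n\|)$ as $n\to\infty$. Then the weak closure of $\Omega=\{zx_n:z\in\mathbb{K},\ n\in\mathbb{Z}_+\}$ is norm nowhere dense in $X$. In particular, $\Omega$ is not weakly dense in $X$.
   Context: $\mathbb{K}\in\{\mathbb{R},\mathbb{C}\}$ is the scalar field. $\mathcal{Y}$ is the class of Banach spaces $X$ such that for every sequence $(x_n)_{n\in\mathbb{Z}_+}$ in $X$ with $n=O(\|x_n\|)$ as $n\to\infty$, the set $\{x_n:n\in\mathbb{Z}_+\}$ is weakly closed. *)

From Stdlib Require Import Reals List.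
Open Scope R_scope.

Record Scalar := {
  sc :> Type;
  s0 : sc;
  s1 : sc;
  sadd : sc -> sc -> sc;
  sopp : sc -> sc;
  smul : sc -> sc -> sc;
  sabs : sc -> R
}.

Definition R_scalar : Scalar :=
  {| sc := R; s0 := 0; s1 := 1; sadd := Rplus; sopp := Ropp; smul := Rmult;
     sabs := Rabs |}.

(* complex numbers as pairs (re, im) *)
Definition Cc := (R * R)%type.
Definition Cadd (z w : Cc) : Cc := (fst z + fst w, snd z + snd w).
Definition Copp (z : Cc) : Cc := (- fst z, - snd z).
Definition Cmul (z w : Cc) : Cc :=
  (fst z * fst w - snd z * snd w, fst z * snd w + snd z * fst w).
Definition Cabs (z : Cc) : R := sqrt (fst z * fst z + snd z * snd z).

Definition C_scalar : Scalar :=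
  {| sc := Cc; s0 := (0, 0); s1 := (1, 0); sadd := Cadd; sopp := Copp;
     smul := Cmul; sabs := Cabs |}.

Definition Kfield (complex : bool) : Scalar :=
  if complex then C_scalar else R_scalar.

Record Banach (K : Scalar) := {
  vec :> Type;
  vzero : vec;
  vadd : vec -> vec -> vec;
  vopp : vec -> vec;
  vscale : K -> vec -> vec;
  vnorm : vec -> R;
  vadd_assoc : forall x y z, vadd x (vadd y z) = vadd (vadd x y) z;
  vadd_comm : forall x y, vadd x y = vadd y x;
  vadd_0 : forall x, vadd x vzero = x;
  vadd_opp : forall x, vadd x (vopp x) = vzero;
  vscale_1 : forall x, vscale (s1 K) x = x;
  vscale_assoc : forall a b x, vscale a (vscale b x) = vscale (smul K a b) x;
  vscale_addv : forall a x y, vscale a (vadd x y) = vadd (vscale a x) (vscale a y);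
  vscale_adds : forall a b x, vscale (sadd K a b) x = vadd (vscale a x) (vscale b x);
  vnorm_nonneg : forall x, 0 <= vnorm x;
  vnorm_eq0 : forall x, vnorm x = 0 -> x = vzero;
  vnorm_scale : forall a x, vnorm (vscale a x) = sabs K a * vnorm x;
  vnorm_triangle : forall x y, vnorm (vadd x y) <= vnorm x + vnorm y;
  vcomplete : forall u : nat -> vec,
    (forall eps, 0 < eps -> exists N, forall m n, (N <= m)%nat -> (N <= n)%nat ->
        vnorm (vadd (u m) (vopp (u n))) < eps) ->
    exists l, forall eps, 0 < eps -> exists N, forall n, (N <= n)%nat ->
        vnorm (vadd (u n) (vopp l)) < eps
}.

Arguments vzero {K} _.
Arguments vadd {K} {_} _ _.
Arguments vopp {K} {_} _.
Arguments vscale {K} {_} _ _.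
Arguments vnorm {K} {_} _.

Section Notions.
Variable K : Scalar.
Variable X : Banach K.

Definition in_dual (f : X -> K) : Prop :=
  (forall x y, f (vadd x y) = sadd K (f x) (f y)) /\
  (forall (a : K) x, f (vscale a x) = smul K a (f x)) /\
  (exists M, forall x, sabs K (f x) <= M * vnorm x).

Definition dim_gt1 : Prop :=
  exists x y : X, forall a b : K,
    vadd (vscale a x) (vscale b y) = vzero X -> a = s0 K /\ b = s0 K.

(** weak closure: x is in the weak closure of A iff every basic weak
    neighbourhood {y : |f_i y - f_i x| < eps, i = 1..m}, f_i in X^*, meets A *)
Definition weak_closure (A : X -> Prop) (x : X) : Prop :=
  forall (fs : list (X -> K)) (eps : R),
    Forall in_dual fs -> 0 < eps ->
    exists a, A a /\
      Forall (fun f => sabs K (sadd K (f a) (sopp K (f x))) < eps) fs.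

Definition weakly_closed (A : X -> Prop) : Prop :=
  forall x, weak_closure A x -> A x.

Definition norm_closure (A : X -> Prop) (x : X) : Prop :=
  forall eps, 0 < eps -> exists a, A a /\ vnorm (vadd a (vopp x)) < eps.

Definition norm_nowhere_dense (A : X -> Prop) : Prop :=
  ~ exists (x : X) (r : R), 0 < r /\
      forall y : X, vnorm (vadd y (vopp x)) < r -> norm_closure A y.

End Notions.

Arguments in_dual {K} {X} _.
Arguments dim_gt1 {K} X.
Arguments weak_closure {K} {X} _ _.
Arguments weakly_closed {K} {X} _.
Arguments norm_closure {K} {X} _ _.
Arguments norm_nowhere_dense {K} {X} _.

Definition in_class_Y {K : Scalar} (X : Banach K) : Prop :=
  forall xs : nat -> X,
    (exists (C : R) (N : nat), forall n, (N <= n)%nat -> INR n <= C * vnorm (xs n)) ->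
    weakly_closed (fun y => exists n, y = xs n).

(* Weak closures are norm closed, so it suffices that the weak closure
   of Omega contains no ball.  The key step: a point y of the weak closure with
   u y <> 0 lies in Omega.  Indeed, y / u y lies in the weak closure of the
   points of the cone Omega on the hyperplane {u = 1}, i.e. of the sequence
   x_n / u (x_n); the growth hypothesis makes this sequence grow linearly, so
   its range is weakly closed since X is in Y.  Now a ball contains a segment
   {y0 + s k : -1 <= s <= 1} with u y0 <> 0 and 0 <> k in ker u (here
   dim X > 1 is used); the segment would lie in Omega, yet it meets each line
   through some x_n at most once, contradicting the uncountability of [-1,1]. *)

From Stdlib Require Import Reals List Lra Lia Field ClassicalEpsilon.
From Coquelicot Require Complex.
Open Scope R_scope.

(* The scalar field: [Kfield true] is Coquelicot's complex field, [Kfield false]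
   is R, so their field structure and absolute-value laws come from the libraries. *)
Definition Kinv (c : bool) : Kfield c -> Kfield c :=
  match c return Kfield c -> Kfield c with
  | true => Complex.Cinv
  | false => Rinv
  end.

Definition Ksub (c : bool) (a b : Kfield c) : Kfield c := sadd _ a (sopp _ b).
Definition Kdiv (c : bool) (a b : Kfield c) : Kfield c := smul _ a (Kinv c b).

Lemma K_field (c : bool) :
  field_theory (s0 (Kfield c)) (s1 (Kfield c)) (sadd _) (smul _) (Ksub c) (sopp _)
    (Kdiv c) (Kinv c) eq.
Proof. destruct c; [exact Complex.C_field_theory | exact Rfield]. Qed.

Definition ofR (c : bool) (r : R) : Kfield c :=
  match c return Kfield c with true => Complex.RtoC r | false => r end.

Lemma Cabs_Cmod (z : Cc) : Cabs z = Complex.Cmod z.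
Proof. unfold Cabs, Complex.Cmod; f_equal; simpl; ring. Qed.

Lemma kabs_nonneg c (a : Kfield c) : 0 <= sabs _ a.
Proof. destruct c; simpl; [rewrite Cabs_Cmod; apply Complex.Cmod_ge_0 | apply Rabs_pos]. Qed.

Lemma kabs_eq0 c (a : Kfield c) : sabs _ a = 0 -> a = s0 _.
Proof.
  destruct c; simpl; [rewrite Cabs_Cmod; apply Complex.Cmod_eq_0 |].
  intro H; destruct (Req_dec a 0) as [|Ha]; [auto | now apply Rabs_no_R0 in Ha].
Qed.

Lemma kabs_pos c (a : Kfield c) : a <> s0 _ -> 0 < sabs _ a.
Proof.
  intro Ha; destruct (kabs_nonneg c a) as [|E]; [auto | exfalso; now apply Ha, kabs_eq0].
Qed.

Lemma kabs0 c : sabs (Kfield c) (s0 _) = 0.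
Proof. destruct c; simpl; [rewrite Cabs_Cmod; apply Complex.Cmod_0 | apply Rabs_R0]. Qed.

Lemma kabs1 c : sabs (Kfield c) (s1 _) = 1.
Proof. destruct c; simpl; [rewrite Cabs_Cmod; apply Complex.Cmod_1 | apply Rabs_R1]. Qed.

Lemma kabs_mul c (a b : Kfield c) : sabs _ (smul _ a b) = sabs _ a * sabs _ b.
Proof. destruct c; simpl; [rewrite !Cabs_Cmod; apply Complex.Cmod_mult | apply Rabs_mult]. Qed.

Lemma kabs_add c (a b : Kfield c) : sabs _ (sadd _ a b) <= sabs _ a + sabs _ b.
Proof. destruct c; simpl; [rewrite !Cabs_Cmod; apply Complex.Cmod_triangle | apply Rabs_triang]. Qed.

Lemma kabs_opp c (a : Kfield c) : sabs _ (sopp _ a) = sabs _ a.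
Proof. destruct c; simpl; [rewrite !Cabs_Cmod; apply Complex.Cmod_opp | apply Rabs_Ropp]. Qed.

Lemma kabs_inv c (a : Kfield c) : a <> s0 _ -> sabs _ (Kinv c a) = / sabs _ a.
Proof.
  destruct c; simpl; [rewrite !Cabs_Cmod; apply Complex.Cmod_inv | intros; apply Rabs_inv].
Qed.

Lemma kabs_ofR c r : sabs _ (ofR c r) = Rabs r.
Proof. destruct c; simpl; [rewrite Cabs_Cmod; apply Complex.Cmod_R | reflexivity]. Qed.

Lemma ofR_inj c r s : ofR c r = ofR c s -> r = s.
Proof. destruct c; simpl; [intro E; now inversion E | auto]. Qed.

(* A sequence of reals misses a point of [-1,1]: keep, at step n, a third of
   the current interval avoiding the n-th term; the nested intervals meet. *)
Definition trisect (h : R) (I : R * R) : R * R :=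
  let (a, b) := I in
  if Rlt_dec h ((a + b) / 2) then (a + 2 * (b - a) / 3, b) else (a, a + (b - a) / 3).

Fixpoint trisections (f : nat -> R) (n : nat) : R * R :=
  match n with O => (-1, 1) | S m => trisect (f m) (trisections f m) end.

Lemma trisect_spec h I : fst I < snd I ->
  fst I <= fst (trisect h I) /\ fst (trisect h I) < snd (trisect h I) /\
  snd (trisect h I) <= snd I /\ (h < fst (trisect h I) \/ snd (trisect h I) < h).
Proof. destruct I as [a b]; simpl; destruct (Rlt_dec h ((a + b) / 2)); simpl; lra. Qed.

Lemma trisections_lt f n : fst (trisections f n) < snd (trisections f n).
Proof.
  induction n as [|n IH]; [simpl; lra |].
  exact (proj1 (proj2 (trisect_spec (f n) _ IH))).
Qed.

Lemma trisections_step f n :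
  fst (trisections f n) <= fst (trisections f (S n)) /\
  fst (trisections f (S n)) < snd (trisections f (S n)) /\
  snd (trisections f (S n)) <= snd (trisections f n) /\
  (f n < fst (trisections f (S n)) \/ snd (trisections f (S n)) < f n).
Proof. exact (trisect_spec (f n) _ (trisections_lt f n)). Qed.

Lemma trisections_nested f n m : (n <= m)%nat ->
  fst (trisections f n) <= fst (trisections f m) /\
  snd (trisections f m) <= snd (trisections f n).
Proof.
  induction 1 as [|m _ IH]; [lra|].
  pose proof (trisections_step f m); lra.
Qed.

Lemma trisections_left_below_right f n m : fst (trisections f n) <= snd (trisections f m).
Proof.
  destruct (trisections_nested f n (max n m)) as [H1 _]; [lia|].
  destruct (trisections_nested f m (max n m)) as [_ H2]; [lia|].
  pose proof (trisections_lt f (max n m)); lra.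
Qed.

(* the supremum of the left ends lies in every interval, hence avoids every term *)
Lemma sequence_misses_interval (f : nat -> R) : exists x, -1 <= x <= 1 /\ forall n, f n <> x.
Proof.
  set (lefts := fun x => exists n, x = fst (trisections f n)).
  destruct (completeness lefts) as [x [Hub Hlub]].
  - exists 1; intros y [n ->]; apply (trisections_left_below_right f n 0).
  - exists (-1), O; reflexivity.
  - assert (Hleft : forall n, fst (trisections f n) <= x) by (intro n; apply Hub; now exists n).
    assert (Hright : forall n, x <= snd (trisections f n))
      by (intro m; apply Hlub; intros y [n ->]; apply trisections_left_below_right).
    exists x; split; [exact (conj (Hleft O) (Hright O)) |].
    intros n E; specialize (Hleft (S n)); specialize (Hright (S n)).
    pose proof (trisections_step f n); lra.
Qed.

Lemma interval_not_countable_union (P : nat -> R -> Prop) :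
  (forall n s s', P n s -> P n s' -> s = s') ->
  exists x, -1 <= x <= 1 /\ forall n, ~ P n x.
Proof.
  intro Huniq.
  set (f := fun n => epsilon (inhabits 0) (P n)).
  destruct (sequence_misses_interval f) as [x [Hx Hf]].
  exists x; split; [exact Hx |].
  intros n Hn; apply (Hf n), (Huniq n); [| exact Hn].
  apply epsilon_spec; now exists x.
Qed.

Section BanachSpace.
Variable c : bool.
Variable X : Banach (Kfield c).
Add Field K_field_c : (K_field c).

Local Notation K := (Kfield c).
Local Notation k0 := (s0 K).
Local Notation k1 := (s1 K).
Local Notation kadd := (sadd K).
Local Notation kmul := (smul K).
Local Notation kopp := (sopp K).
Local Notation kabs := (sabs K).
Local Notation kinv := (Kinv c).

Lemma k1_neq_k0 : k1 <> k0.
Proof. exact (F_1_neq_0 (K_field c)). Qed.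

Lemma kmul_neq0 a b : a <> k0 -> b <> k0 -> kmul a b <> k0.
Proof.
  intros Ha Hb E; apply Hb.
  replace b with (kmul (kinv a) (kmul a b)) by (field; auto).
  rewrite E; ring.
Qed.

Lemma vadd_0l (x : X) : vadd (vzero X) x = x.
Proof. rewrite vadd_comm; apply vadd_0. Qed.

Lemma vadd_cancel_l (y a b : X) : vadd y a = vadd y b -> a = b.
Proof.
  assert (Hcancel : forall v, vadd (vopp y) (vadd y v) = v).
  { intro v; rewrite vadd_assoc, (vadd_comm _ X (vopp y) y), vadd_opp; apply vadd_0l. }
  intro E; rewrite <- (Hcancel a), <- (Hcancel b), E; reflexivity.
Qed.

Lemma vscale_0 (x : X) : vscale k0 x = vzero X.
Proof.
  apply (vadd_cancel_l (vscale k0 x)).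
  rewrite <- vscale_adds, vadd_0; f_equal; ring.
Qed.

Lemma vscale_zero a : vscale a (vzero X) = vzero X.
Proof. rewrite <- (vscale_0 (vzero X)), vscale_assoc; f_equal; ring. Qed.

Lemma vopp_scale (x : X) : vopp x = vscale (kopp k1) x.
Proof.
  apply (vadd_cancel_l x).
  rewrite vadd_opp, <- (vscale_1 _ X x) at 1.
  rewrite <- vscale_adds, <- (vscale_0 x); f_equal; ring.
Qed.

Lemma vnorm0 : vnorm (vzero X) = 0.
Proof. rewrite <- (vscale_0 (vzero X)), vnorm_scale, kabs0; ring. Qed.

Lemma vnorm_pos (v : X) : v <> vzero X -> 0 < vnorm v.
Proof.
  intro Hv; destruct (vnorm_nonneg _ _ v) as [|E]; [auto |].
  exfalso; apply Hv, vnorm_eq0; auto.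
Qed.

Lemma vsub_self (x : X) : vnorm (vadd x (vopp x)) = 0.
Proof. rewrite vadd_opp; apply vnorm0. Qed.

Lemma vsub_shift (y v x : X) : vadd (vadd y v) (vopp x) = vadd (vadd y (vopp x)) v.
Proof. rewrite <- !vadd_assoc, (vadd_comm _ X v (vopp x)); reflexivity. Qed.

Lemma vscale_inj_l (k : X) a b : k <> vzero X -> vscale a k = vscale b k -> a = b.
Proof.
  intros Hk E.
  assert (Hdiff : vscale (kadd a (kopp b)) k = vzero X).
  { rewrite vscale_adds, E.
    replace (kopp b) with (kmul (kopp k1) b) by ring.
    rewrite <- vscale_assoc, <- vopp_scale; apply vadd_opp. }
  apply (f_equal vnorm) in Hdiff; rewrite vnorm_scale, vnorm0 in Hdiff.
  pose proof (vnorm_pos k Hk).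
  assert (Hab : kadd a (kopp b) = k0).
  { apply kabs_eq0; apply Rmult_integral in Hdiff; destruct Hdiff; [auto | lra]. }
  replace a with (kadd (kadd a (kopp b)) b) by ring; rewrite Hab; ring.
Qed.

Lemma vscale_to_norm (k : X) r : k <> vzero X -> 0 <= r ->
  vnorm (vscale (ofR c (r / vnorm k)) k) = r.
Proof.
  intros Hk Hr; pose proof (vnorm_pos k Hk).
  rewrite vnorm_scale, kabs_ofR, Rabs_pos_eq; [field; lra |].
  apply Rmult_le_pos; [lra | left; apply Rinv_0_lt_compat; lra].
Qed.

Section DualFunctional.
Variable f : X -> K.
Hypothesis Hf : in_dual f.

Lemma dual_add x y : f (vadd x y) = kadd (f x) (f y).
Proof. apply Hf. Qed.

Lemma dual_scale a x : f (vscale a x) = kmul a (f x).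
Proof. apply Hf. Qed.

Lemma dual_sub x y : f (vadd x (vopp y)) = kadd (f x) (kopp (f y)).
Proof. rewrite dual_add, vopp_scale, dual_scale; f_equal; ring. Qed.

Lemma dual_zero : f (vzero X) = k0.
Proof. rewrite <- (vscale_0 (vzero X)), dual_scale; ring. Qed.

End DualFunctional.

Lemma dual_family_bound (fs : list (X -> K)) : Forall in_dual fs ->
  exists M, 0 < M /\ Forall (fun f => forall v, kabs (f v) <= M * vnorm v) fs.
Proof.
  induction 1 as [|f fs [_ [_ [Mf HMf]]] _ [M [HM Hfs]]].
  - exists 1; split; [lra | constructor].
  - exists (Rmax M (Rmax Mf 1)).
    assert (HM' : M <= Rmax M (Rmax Mf 1)) by apply Rmax_l.
    assert (HMf' : Mf <= Rmax M (Rmax Mf 1))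
      by (eapply Rle_trans; [apply Rmax_l | apply Rmax_r]).
    split; [lra | constructor].
    + intro v; eapply Rle_trans; [apply HMf |].
      apply Rmult_le_compat_r; [apply vnorm_nonneg | exact HMf'].
    + eapply Forall_impl; [| exact Hfs]; intros g Hg v.
      eapply Rle_trans; [apply Hg |].
      apply Rmult_le_compat_r; [apply vnorm_nonneg | exact HM'].
Qed.

Lemma weak_closure_mono (A B : X -> Prop) y :
  (forall a, A a -> B a) -> weak_closure A y -> weak_closure B y.
Proof.
  intros HAB Hy fs eps Hfs Heps; destruct (Hy fs eps Hfs Heps) as [a [Ha H]].
  exists a; auto.
Qed.

(* weak closures are norm closed, since weak neighbourhoods contain norm balls *)
Lemma weak_closure_norm_closed (A : X -> Prop) y :
  norm_closure (weak_closure A) y -> weak_closure A y.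
Proof.
  intros Hy fs eps Hfs Heps.
  destruct (dual_family_bound fs Hfs) as [M [HM HMfs]].
  destruct (Hy (eps / (2 * M))) as [a [Ha Hay]]; [apply Rdiv_lt_0_compat; lra |].
  destruct (Ha fs (eps / 2) Hfs ltac:(lra)) as [b [Hb Hba]].
  exists b; split; [exact Hb |].
  rewrite Forall_forall in *; intros f Hin.
  assert (Hfa : kabs (kadd (f a) (kopp (f y))) < eps / 2).
  { rewrite <- dual_sub by auto; eapply Rle_lt_trans; [apply HMfs; exact Hin |].
    apply (Rmult_lt_compat_l M) in Hay; [| exact HM].
    replace (M * (eps / (2 * M))) with (eps / 2) in Hay by (field; lra); exact Hay. }
  specialize (Hba f Hin).
  replace (kadd (f b) (kopp (f y)))
    with (kadd (kadd (f b) (kopp (f a))) (kadd (f a) (kopp (f y)))) by ring.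
  eapply Rle_lt_trans; [apply kabs_add | lra].
Qed.

Lemma weak_closure_scale (A : X -> Prop) y t :
  (forall s a, A a -> A (vscale s a)) ->
  weak_closure A y -> weak_closure A (vscale t y).
Proof.
  intros HA Hy fs eps Hfs Heps.
  pose proof (kabs_nonneg c t) as Ht.
  destruct (Hy fs (eps / (kabs t + 1)) Hfs) as [a [Ha Hay]];
    [apply Rdiv_lt_0_compat; lra |].
  exists (vscale t a); split; [auto |].
  rewrite Forall_forall in *; intros f Hin; specialize (Hay f Hin).
  rewrite !dual_scale by auto.
  replace (kadd (kmul t (f a)) (kopp (kmul t (f y))))
    with (kmul t (kadd (f a) (kopp (f y)))) by ring.
  rewrite kabs_mul.
  apply Rle_lt_trans with (kabs t * (eps / (kabs t + 1))).
  - apply Rmult_le_compat_l; [exact Ht | left; exact Hay].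
  - apply Rmult_lt_reg_r with (kabs t + 1); [lra |].
    replace (kabs t * (eps / (kabs t + 1)) * (kabs t + 1)) with (kabs t * eps)
      by (field; lra).
    nra.
Qed.

Lemma near_one_inverse w d : kabs (kadd k1 (kopp w)) < d -> d <= 1/2 ->
  w <> k0 /\ kabs (kinv w) <= 2.
Proof.
  intros Hw Hd.
  assert (Hw2 : 1/2 <= kabs w).
  { pose proof (kabs_add c w (kadd k1 (kopp w))) as T.
    replace (kadd w (kadd k1 (kopp w))) with k1 in T by ring; rewrite kabs1 in T; lra. }
  assert (Hw0 : w <> k0) by (intro E; rewrite E, kabs0 in Hw2; lra).
  split; [exact Hw0 |].
  rewrite kabs_inv by exact Hw0; rewrite <- (Rinv_inv 2).
  apply Rinv_le_contravar; lra.
Qed.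

(* error estimate for dividing an approximant [a] by [w = u a]:
   [f (a / w) - f y = (p + (1 - w) q) / w] with [p = f a - f y], [q = f y] *)
Lemma renormalise_estimate (p q w : K) (d B : R) :
  kabs p < d -> kabs (kadd k1 (kopp w)) < d -> d <= 1/2 -> kabs q <= B ->
  kabs (kmul (kinv w) (kadd p (kmul (kadd k1 (kopp w)) q))) < 2 * d * (1 + B).
Proof.
  intros Hp Hw Hd Hq.
  destruct (near_one_inverse w d Hw Hd) as [_ Hinv].
  pose proof (kabs_add c p (kmul (kadd k1 (kopp w)) q)) as Hsum.
  rewrite kabs_mul in Hsum |- *.
  pose proof (kabs_nonneg c (kadd k1 (kopp w))).
  pose proof (kabs_nonneg c q).
  pose proof (kabs_nonneg c (kadd p (kmul (kadd k1 (kopp w)) q))).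
  assert (kabs (kadd k1 (kopp w)) * kabs q <= d * B) by (apply Rmult_le_compat; lra).
  assert (kabs (kinv w) * kabs (kadd p (kmul (kadd k1 (kopp w)) q))
          <= 2 * kabs (kadd p (kmul (kadd k1 (kopp w)) q)))
    by (apply Rmult_le_compat_r; lra).
  lra.
Qed.

(* points of the weak closure of a cone [A] on the hyperplane [u = 1] are weak
   limits of points of [A] on that hyperplane: divide approximants by their
   [u]-value, which is close to [1] *)
Lemma weak_closure_normalise (A : X -> Prop) (u : X -> K) y :
  (forall s a, A a -> A (vscale s a)) -> in_dual u ->
  weak_closure A y -> u y = k1 -> weak_closure (fun a => A a /\ u a = k1) y.
Proof.
  intros HA Hu Hy Huy fs eps Hfs Heps.
  destruct (dual_family_bound fs Hfs) as [M [HM HMfs]].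
  set (B := M * vnorm y).
  assert (HB : 0 <= B) by (apply Rmult_le_pos; [lra | apply vnorm_nonneg]).
  set (d := Rmin (1/2) (eps / (2 * (1 + B)))).
  assert (Hd12 : d <= 1/2) by apply Rmin_l.
  assert (Hd0 : 0 < d) by (apply Rmin_glb_lt; [lra | apply Rdiv_lt_0_compat; lra]).
  assert (Hdeps : 2 * d * (1 + B) <= eps).
  { assert (Hd2 : d <= eps / (2 * (1 + B))) by apply Rmin_r.
    apply (Rmult_le_compat_r (2 * (1 + B))) in Hd2; [| lra].
    replace (eps / (2 * (1 + B)) * (2 * (1 + B))) with eps in Hd2 by (field; lra).
    lra. }
  destruct (Hy (u :: fs) d (Forall_cons _ Hu Hfs) Hd0) as [a [Ha Hnear]].
  apply Forall_cons_iff in Hnear as [Hua Hfsa]; rewrite Huy in Hua.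
  set (w := u a) in *.
  assert (Hw : kabs (kadd k1 (kopp w)) < d).
  { replace (kadd k1 (kopp w)) with (kopp (kadd w (kopp k1))) by ring.
    rewrite kabs_opp; exact Hua. }
  destruct (near_one_inverse w d Hw Hd12) as [Hw0 _].
  exists (vscale (kinv w) a); split.
  - split; [apply HA; exact Ha |].
    rewrite dual_scale by exact Hu; fold w; field; exact Hw0.
  - rewrite Forall_forall in *; intros f Hin.
    rewrite dual_scale by auto.
    replace (kadd (kmul (kinv w) (f a)) (kopp (f y)))
      with (kmul (kinv w) (kadd (kadd (f a) (kopp (f y))) (kmul (kadd k1 (kopp w)) (f y))))
      by (field; exact Hw0).
    eapply Rlt_le_trans; [| exact Hdeps].
    apply renormalise_estimate; [apply Hfsa | exact Hw | exact Hd12 | apply HMfs]; exact Hin.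
Qed.

Section Functional.
Variable u : X -> K.
Hypothesis Hu : in_dual u.

Lemma kernel_nontrivial : dim_gt1 X -> exists k, u k = k0 /\ k <> vzero X.
Proof.
  intros [x1 [x2 Hindep]].
  destruct (excluded_middle_informative (u x1 = k0)) as [E|E].
  - exists x1; split; [exact E |]; intro Z; apply k1_neq_k0.
    apply (Hindep k1 k0); rewrite Z, vscale_zero, vscale_0, vadd_0; reflexivity.
  - exists (vadd (vscale (kopp (u x2)) x1) (vscale (u x1) x2)); split.
    + rewrite dual_add, !dual_scale by exact Hu; ring.
    + intro Z; apply E, (Hindep _ _ Z).
Qed.

Lemma ball_leaves_kernel x0 r : (exists e, u e <> k0) -> 0 < r ->
  exists y0, vnorm (vadd y0 (vopp x0)) < r /\ u y0 <> k0.
Proof.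
  intros [e He] Hr.
  destruct (excluded_middle_informative (u x0 = k0)) as [E|E].
  - assert (He0 : e <> vzero X) by (intro Z; apply He; rewrite Z; apply dual_zero, Hu).
    set (a := ofR c (r / 2 / vnorm e)).
    assert (Hnorm : vnorm (vscale a e) = r / 2) by (apply vscale_to_norm; [exact He0 | lra]).
    exists (vadd x0 (vscale a e)); split.
    + rewrite vsub_shift, vadd_opp, vadd_0l, Hnorm; lra.
    + rewrite dual_add, dual_scale, E by exact Hu.
      replace (kadd k0 (kmul a (u e))) with (kmul a (u e)) by ring.
      apply kmul_neq0; [| exact He].
      intro Z; rewrite Z, vscale_0, vnorm0 in Hnorm; lra.
  - exists x0; split; [rewrite vsub_self; exact Hr | exact E].
Qed.

Section Rays.
Variable xs : nat -> X.

Definition Omega (y : X) : Prop := exists (z : K) (n : nat), y = vscale z (xs n).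

Lemma Omega_cone s a : Omega a -> Omega (vscale s a).
Proof. intros [z [n ->]]; exists (kmul s z), n; apply vscale_assoc. Qed.

(* a segment parallel to ker u but off ker u meets each line of Omega at most
   once: the value of u fixes the point on the line *)
Lemma segment_meets_line_once y0 k n s s' z z' :
  u y0 <> k0 -> u k = k0 -> k <> vzero X ->
  vadd y0 (vscale (ofR c s) k) = vscale z (xs n) ->
  vadd y0 (vscale (ofR c s') k) = vscale z' (xs n) -> s = s'.
Proof.
  intros Hy0 Hk Hk0 E E'.
  assert (Hlevel : forall t, u (vadd y0 (vscale (ofR c t) k)) = u y0)
    by (intro t; rewrite dual_add, dual_scale, Hk by exact Hu; ring).
  assert (Hz : u y0 = kmul z (u (xs n))) by (rewrite <- (Hlevel s), E; apply dual_scale, Hu).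
  assert (Hz' : u y0 = kmul z' (u (xs n))) by (rewrite <- (Hlevel s'), E'; apply dual_scale, Hu).
  assert (Hxn : u (xs n) <> k0) by (intro Z; apply Hy0; rewrite Hz, Z; ring).
  assert (Ezz : z = z').
  { replace z with (kmul (kmul z (u (xs n))) (kinv (u (xs n)))) by (field; exact Hxn).
    rewrite <- Hz, Hz'; field; exact Hxn. }
  subst z'; rewrite <- E' in E.
  apply vadd_cancel_l, (vscale_inj_l k _ _ Hk0) in E.
  exact (ofR_inj c s s' E).
Qed.

Lemma Omega_contains_no_segment y0 k :
  u y0 <> k0 -> u k = k0 -> k <> vzero X ->
  exists s, -1 <= s <= 1 /\ ~ Omega (vadd y0 (vscale (ofR c s) k)).
Proof.
  intros Hy0 Hk Hk0.
  destruct (interval_not_countable_union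
              (fun n s => exists z, vadd y0 (vscale (ofR c s) k) = vscale z (xs n)))
    as [s [Hs Hmiss]].
  - intros n s s' [z E] [z' E']; exact (segment_meets_line_once y0 k n s s' z z' Hy0 Hk Hk0 E E').
  - exists s; split; [exact Hs |].
    intros [z [n E]]; apply (Hmiss n); exists z; exact E.
Qed.

Hypothesis HY : in_class_Y X.
Hypothesis Hsmall : exists (C : R) (N : nat), (1 <= N)%nat /\ forall n, (N <= n)%nat ->
  kabs (u (xs n)) <= C * (vnorm (xs n) / INR n).

Section Normalisation.
Variable k : X.
Hypothesis Huk : u k = k0.
Hypothesis Hk : k <> vzero X.

(* the sequence normalised to the hyperplane u = 1; where u (xs n) = 0 it is
   padded by the multiples n k, which lie off that hyperplane *)
Definition normalised_seq (n : nat) : X :=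
  if excluded_middle_informative (u (xs n) = k0) then vscale (ofR c (INR n)) k
  else vscale (kinv (u (xs n))) (xs n).

Lemma Omega_hyperplane_in_normalised_seq a :
  Omega a -> u a = k1 -> exists n, a = normalised_seq n.
Proof.
  intros [z [n ->]] Hua; exists n.
  rewrite dual_scale in Hua by exact Hu.
  unfold normalised_seq; destruct (excluded_middle_informative (u (xs n) = k0)) as [E|E].
  - exfalso; apply k1_neq_k0; rewrite <- Hua, E; ring.
  - f_equal; replace z with (kmul (kmul z (u (xs n))) (kinv (u (xs n)))) by (field; exact E).
    rewrite Hua; ring.
Qed.

Lemma normalised_seq_hyperplane_in_Omega n :
  u (normalised_seq n) = k1 -> Omega (normalised_seq n).
Proof.
  unfold normalised_seq; destruct (excluded_middle_informative (u (xs n) = k0)) as [E|E].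
  - rewrite dual_scale, Huk by exact Hu; intro H; exfalso; apply k1_neq_k0; rewrite <- H; ring.
  - intros _; exists (kinv (u (xs n))), n; reflexivity.
Qed.

(* the normalised sequence grows at least linearly: this is where the
   hypothesis |u (xs n)| = O(||xs n|| / n) enters *)
Lemma normalised_seq_growth : exists (C : R) (N : nat), forall n, (N <= n)%nat ->
  INR n <= C * vnorm (normalised_seq n).
Proof.
  destruct Hsmall as [C [N [HN HC]]].
  pose proof (vnorm_pos k Hk) as Hkpos.
  exists (Rmax C (/ vnorm k)), N; intros n Hn.
  assert (Hnpos : 0 < INR n) by (apply lt_0_INR; lia).
  assert (HCmax : C <= Rmax C (/ vnorm k)) by apply Rmax_l.
  assert (Hkmax : / vnorm k <= Rmax C (/ vnorm k)) by apply Rmax_r.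
  unfold normalised_seq; destruct (excluded_middle_informative (u (xs n) = k0)) as [E|E].
  - rewrite vnorm_scale, kabs_ofR, Rabs_pos_eq by lra.
    apply Rle_trans with (/ vnorm k * (INR n * vnorm k)); [right; field; lra |].
    apply Rmult_le_compat_r; [apply Rmult_le_pos; lra | exact Hkmax].
  - rewrite vnorm_scale, kabs_inv by exact E.
    pose proof (kabs_pos c _ E) as Hupos.
    pose proof (vnorm_nonneg _ _ (xs n)) as Hxpos.
    apply Rle_trans with (C * (/ kabs (u (xs n)) * vnorm (xs n))).
    + apply Rmult_le_reg_r with (kabs (u (xs n))); [exact Hupos |].
      replace (C * (/ kabs (u (xs n)) * vnorm (xs n)) * kabs (u (xs n)))
        with (C * vnorm (xs n)) by (field; lra).
      specialize (HC n Hn); apply (Rmult_le_compat_l (INR n)) in HC; [| lra].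
      replace (INR n * (C * (vnorm (xs n) / INR n))) with (C * vnorm (xs n)) in HC
        by (field; lra).
      lra.
    + apply Rmult_le_compat_r; [| exact HCmax].
      apply Rmult_le_pos; [left; apply Rinv_0_lt_compat |]; assumption.
Qed.

(* the key step: off ker u the weak closure of Omega adds nothing; normalise
   y to the hyperplane u = 1 and use that the normalised sequence, growing
   linearly, has weakly closed range because X is in the class Y *)
Lemma weak_closure_Omega_off_kernel y : weak_closure Omega y -> u y <> k0 -> Omega y.
Proof.
  intros Hy Hy0.
  set (y1 := vscale (kinv (u y)) y).
  assert (Hy1 : weak_closure Omega y1) by (apply weak_closure_scale; [exact Omega_cone | exact Hy]).
  assert (Huy1 : u y1 = k1) by (unfold y1; rewrite dual_scale by exact Hu; field; exact Hy0).
  assert (Hseq : weak_closure (fun a => exists n, a = normalised_seq n) y1).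
  { apply (weak_closure_mono (fun a => Omega a /\ u a = k1)).
    - intros a [Ha Hua]; exact (Omega_hyperplane_in_normalised_seq a Ha Hua).
    - exact (weak_closure_normalise Omega u y1 Omega_cone Hu Hy1 Huy1). }
  destruct (HY normalised_seq normalised_seq_growth y1 Hseq) as [n Hn].
  replace y with (vscale (u y) y1)
    by (unfold y1; rewrite vscale_assoc;
        replace (kmul (u y) (kinv (u y))) with k1 by (field; exact Hy0); apply vscale_1).
  apply Omega_cone; rewrite Hn; apply normalised_seq_hyperplane_in_Omega.
  rewrite <- Hn; exact Huy1.
Qed.

End Normalisation.

Hypothesis Hdim : dim_gt1 X.
Hypothesis Hu0 : exists e, u e <> k0.

(* the weak closure of Omega contains no ball: a ball contains a segment as
   in [Omega_contains_no_segment], which would lie in Omega by the key step *)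
Lemma weak_closure_Omega_no_ball : ~ exists x0 r, 0 < r /\
  forall y, vnorm (vadd y (vopp x0)) < r -> weak_closure Omega y.
Proof.
  intros [x0 [r [Hr Hball]]].
  destruct (kernel_nontrivial Hdim) as [k [Huk Hk]].
  destruct (ball_leaves_kernel x0 (r / 2) Hu0) as [y0 [Hy0 Hy0u]]; [lra |].
  set (k' := vscale (ofR c (r / 4 / vnorm k)) k).
  assert (Hk'n : vnorm k' = r / 4) by (apply vscale_to_norm; [exact Hk | lra]).
  assert (Hk'u : u k' = k0) by (unfold k'; rewrite dual_scale, Huk by exact Hu; ring).
  assert (Hk'0 : k' <> vzero X) by (intro Z; rewrite Z, vnorm0 in Hk'n; lra).
  destruct (Omega_contains_no_segment y0 k' Hy0u Hk'u Hk'0) as [s [Hs Hnot]].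
  apply Hnot, (weak_closure_Omega_off_kernel k Huk Hk).
  - apply Hball; rewrite vsub_shift.
    eapply Rle_lt_trans; [apply vnorm_triangle |].
    rewrite vnorm_scale, kabs_ofR, Hk'n.
    assert (Rabs s <= 1) by (apply Rabs_le; lra).
    nra.
  - rewrite dual_add, dual_scale, Hk'u by exact Hu.
    replace (kadd (u y0) (kmul (ofR c s) k0)) with (u y0) by ring; exact Hy0u.
Qed.

End Rays.
End Functional.
End BanachSpace.

Theorem lemma2p3 (complex : bool) (X : Banach (Kfield complex))
  (HY : in_class_Y X) (Hdim : dim_gt1 X)
  (xs : nat -> X) (u : X -> Kfield complex)
  (Hu : in_dual u) (Hu0 : exists x : X, u x <> s0 (Kfield complex))
  (Hbig : exists (C : R) (N : nat), (1 <= N)%nat /\ forall n, (N <= n)%nat ->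
            sabs (Kfield complex) (u (xs n)) <= C * (vnorm (xs n) / INR n)) :
  let Omega := fun y : X => exists (z : Kfield complex) (n : nat), y = vscale z (xs n) in
  norm_nowhere_dense (weak_closure Omega) /\
  ~ (forall x : X, weak_closure Omega x).
Proof.
  intros Omega.
  assert (Hnd : norm_nowhere_dense (weak_closure Omega)).
  { intros [x0 [r [Hr Hball]]].
    apply (weak_closure_Omega_no_ball complex X u Hu xs HY Hbig Hdim Hu0).
    exists x0, r; split; [exact Hr |].
    intros y Hy; apply weak_closure_norm_closed, Hball, Hy. }
  split; [exact Hnd |].
  intro Hdense; apply Hnd; exists (vzero X), 1; split; [lra |].
  intros y _ eps Heps; exists y; split; [apply Hdense | rewrite vsub_self; exact Heps].
Qed.
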